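(* For $n\in\mathbb{Z}$, $0<q<1$ and $t>0$, \[\mathbb{P}(\chi+S\le n)=\frac{1}{(-tq^{\frac12+n};q)_\infty},\] where $\chi$ and $S$ are independent random variables with the laws below.
   Context: $(x;q)_\infty=\prod_{j\ge0}(1-xq^j)$, $(x;q)_n=(x;q)_\infty/(xq^n;q)_\infty$, $\theta(x)=(x;q)_\infty(q/x;q)_\infty$. $\chi$ is $\mathbb{Z}_{\ge0}$-valued with $\mathbb{P}(\chi=n)=\frac{q^n}{(q;q)_n}(q;q)_\infty$; $S$ is $\mathbb{Z}$-valued with $\mathbb{P}(S=\ell)=\frac{t^\ell q^{\ell^2/2}}{(q;q)_\infty\theta(-tq^{1/2})}$. *)

From Stdlib Require Import Reals ZArith.
From Coquelicot Require Import Coquelicot.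
Open Scope R_scope.

Fixpoint qpoch (x q : R) (n : nat) : R :=
  match n with
  | O => 1
  | S m => qpoch x q m * (1 - x * q ^ m)
  end.

Definition qpoch_inf (x q : R) : R := real (Lim_seq (fun n => qpoch x q n)).

Definition qtheta (x q : R) : R := qpoch_inf x q * qpoch_inf (q / x) q.

(* Law of chi on Z_{>=0}: P(chi = n) = q^n/(q;q)_n * (q;q)_oo *)
Definition p_chi (q : R) (n : nat) : R :=
  q ^ n / qpoch q q n * qpoch_inf q q.

(* Law of S on Z: P(S = l) = t^l q^{l^2/2} / ((q;q)_oo theta(-t q^{1/2})) *)
Definition p_S (q t : R) (l : Z) : R :=
  powerRZ t l * Rpower q (IZR (l * l) / 2)
  / (qpoch_inf q q * qtheta (- t * Rpower q (1/2)) q).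

(* P(chi + S <= n) for chi, S independent with the laws above:
   sum_{k >= 0} P(chi = k) * P(S <= n - k),
   with P(S <= m) = sum_{j >= 0} P(S = m - j). *)
Definition p_S_le (q t : R) (m : Z) : R :=
  Series (fun j : nat => p_S q t (m - Z.of_nat j)%Z).

From Stdlib Require Import Reals ZArith Lra Lia.
From Coquelicot Require Import Coquelicot.
Open Scope R_scope.

(* Proof outline.
   1. (q;q)_n decreases to a strictly positive limit (q;q)_oo, because
      1 - x >= exp(-x/(1-q)) for 0 < x <= q.
   2. Euler's series E(z) = sum_k q^(k(k-1)/2) z^k / (q;q)_k converges for z > 0, satisfies
      E(z) = (1+z) E(qz), and E(q^N z) -> 1; hence (-z;q)_N = E(z)/E(q^N z) -> E(z),
      i.e. (-z;q)_oo = E(z).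
   3. Triple product: J(n) = t^n q^(n^2/2) E(q^(1/2-n)/t) E(t q^(1/2+n)) does not depend
      on n (two applications of the functional equation), and J(0) = theta(-t q^(1/2)).
   4. P(S = n - m) is a constant multiple of (q;q)_m times the m-th Euler term at
      q^(1/2-n)/t, while P(chi <= m) = (q;q)_oo/(q;q)_m by telescoping.
   5. Summation by parts turns sum_k P(chi = k) P(S <= n - k) into
      sum_m P(S = n - m) P(chi <= m) = t^n q^(n^2/2) E(q^(1/2-n)/t) / theta(-t q^(1/2)),
      which equals 1/E(t q^(1/2+n)) = 1/(-t q^(1/2+n); q)_oo by step 3. *)

Lemma pow_le_one (x : R) (n : nat) : 0 <= x <= 1 -> x ^ n <= 1.
Proof. intros hx. rewrite <- (pow1 n). apply pow_incr. lra. Qed.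

Lemma real_Lim_seq (u : nat -> R) (l : R) : is_lim_seq u l -> real (Lim_seq u) = l.
Proof. intros hu. now rewrite (is_lim_seq_unique _ _ hu). Qed.

Lemma qpoch_S (x q : R) (n : nat) : qpoch x q (S n) = qpoch x q n * (1 - x * q ^ n).
Proof. reflexivity. Qed.

Section QPochhammerQQ.
Variable q : R.
Hypothesis hq : 0 < q < 1.

Lemma qpow_S_bounds (k : nat) : 0 < q ^ S k <= q.
Proof.
  pose proof (pow_le_one q k ltac:(lra)). assert (0 < q ^ k) by (apply pow_lt; lra).
  simpl. split; nra.
Qed.

Lemma qqpoch_bounds (n : nat) : 0 < qpoch q q n <= 1.
Proof.
  induction n as [|n IH]; simpl; [lra|].
  pose proof (qpow_S_bounds n). simpl in *. nra.
Qed.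

Lemma qqpoch_decreasing (n : nat) : qpoch q q (S n) <= qpoch q q n.
Proof. rewrite qpoch_S. pose proof (qqpoch_bounds n). pose proof (qpow_S_bounds n). simpl in *. nra. Qed.

(* The elementary estimate behind the positivity of (q;q)_oo. *)
Lemma one_minus_ge_exp (x : R) : 0 < x <= q -> exp (- (x / (1 - q))) <= 1 - x.
Proof.
  intros hx. set (u := x / (1 - q)).
  assert (hu : 0 < u) by (apply Rdiv_lt_0_compat; lra).
  assert (hexp : 1 + u <= exp u) by (left; apply exp_ineq1; lra).
  assert (hprod : 1 <= (1 - x) * (1 + u)).
  { assert (0 <= x * (q - x) / (1 - q)) by (apply Rdiv_le_0_compat; nra).
    replace ((1 - x) * (1 + u)) with (1 + x * (q - x) / (1 - q)) by (unfold u; field; lra).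
    lra. }
  rewrite exp_Ropp. apply Rle_trans with (/ (1 + u)).
  - apply Rinv_le_contravar; lra.
  - apply Rmult_le_reg_r with (1 + u); [lra|]. rewrite Rinv_l; lra.
Qed.

(* (q;q)_n >= exp(-(q + ... + q^n)/(1-q)), with the geometric sum in closed form. *)
Lemma qqpoch_lower_bound (n : nat) :
  exp (- (q - q ^ S n) / ((1 - q) * (1 - q))) <= qpoch q q n.
Proof.
  induction n as [|n IH].
  - simpl. replace (- (q - q * 1) / ((1 - q) * (1 - q))) with 0 by (field; lra).
    rewrite exp_0; lra.
  - rewrite qpoch_S. pose proof (qpow_S_bounds n) as hx. simpl in hx.
    replace (- (q - q ^ S (S n)) / ((1 - q) * (1 - q)))
      with (- (q - q ^ S n) / ((1 - q) * (1 - q)) + - (q * q ^ n / (1 - q)))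
      by (simpl; field; lra).
    rewrite exp_plus. apply Rmult_le_compat.
    + left; apply exp_pos.
    + left; apply exp_pos.
    + exact IH.
    + apply one_minus_ge_exp; lra.
Qed.

Lemma qqpoch_inf_spec : is_lim_seq (qpoch q q) (qpoch_inf q q) /\ 0 < qpoch_inf q q.
Proof.
  set (c := exp (- q / ((1 - q) * (1 - q)))).
  assert (hc : forall n, c <= qpoch q q n).
  { intros n. eapply Rle_trans; [|apply qqpoch_lower_bound].
    left; apply exp_increasing. pose proof (qpow_S_bounds n).
    unfold Rdiv. apply Rmult_lt_compat_r; [apply Rinv_0_lt_compat; nra | lra]. }
  destruct (decreasing_cv (qpoch q q)) as [l hl].
  - intros n. apply qqpoch_decreasing.
  - exists (- c). intros x [n ->]. unfold opp_seq. specialize (hc n). lra.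
  - apply is_lim_seq_Reals in hl.
    assert (hinf : qpoch_inf q q = l) by exact (real_Lim_seq _ _ hl).
    rewrite hinf. split; [exact hl|].
    apply Rlt_le_trans with c; [apply exp_pos|].
    exact (is_lim_seq_le (fun _ => c) (qpoch q q) c l hc (is_lim_seq_const c) hl).
Qed.

End QPochhammerQQ.

(* Euler's series E(z) = sum_k q^(k(k-1)/2) z^k / (q;q)_k; for z > 0 it equals (-z;q)_oo. *)
Section Euler.
Variable q : R.
Hypothesis hq : 0 < q < 1.

Definition euler_coef (k : nat) : R := Rpower q (INR k * (INR k - 1) / 2) / qpoch q q k.
Definition euler_term (z : R) (k : nat) : R := euler_coef k * z ^ k.
Definition euler (z : R) : R := Series (euler_term z).

Lemma Rpower_triangular (k : nat) :
  Rpower q (INR (S k) * (INR (S k) - 1) / 2) = Rpower q (INR k * (INR k - 1) / 2) * q ^ k.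
Proof.
  rewrite <- Rpower_pow by lra. rewrite <- Rpower_plus. f_equal. rewrite S_INR. field.
Qed.

Lemma euler_coef_pos (k : nat) : 0 < euler_coef k.
Proof. apply Rdiv_lt_0_compat; [apply exp_pos | apply qqpoch_bounds; exact hq]. Qed.

Lemma euler_coef_S (k : nat) : euler_coef (S k) = q ^ k * euler_coef k / (1 - q ^ S k).
Proof.
  unfold euler_coef. rewrite Rpower_triangular, qpoch_S.
  pose proof (qqpoch_bounds q hq k). pose proof (qpow_S_bounds q hq k).
  simpl in *. field. lra.
Qed.

Lemma euler_term_pos (z : R) (k : nat) : 0 < z -> 0 < euler_term z k.
Proof. intros hz. apply Rmult_lt_0_compat; [apply euler_coef_pos | apply pow_lt; exact hz]. Qed.

Lemma euler_term_0 (z : R) : euler_term z 0 = 1.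
Proof.
  unfold euler_term, euler_coef. simpl.
  replace (0 * (0 - 1) / 2) with 0 by field. rewrite Rpower_O by lra. field.
Qed.

(* The recurrence of the coefficients, read off termwise: E(z) = (1+z) E(qz). *)
Lemma euler_term_S (z : R) (k : nat) :
  euler_term z (S k) = euler_term (q * z) (S k) + z * euler_term (q * z) k.
Proof.
  unfold euler_term. rewrite !euler_coef_S, !Rpow_mult_distr.
  pose proof (qpow_S_bounds q hq k). simpl in *. field. lra.
Qed.

(* Ratio test: consecutive terms have ratio z q^k / (1 - q^(k+1)) -> 0. *)
Lemma ex_series_euler (z : R) : 0 < z -> ex_series (euler_term z).
Proof.
  intros hz.
  apply ex_series_ext with (fun k => Rabs (euler_term z k)).
  { intros k. apply Rabs_pos_eq. left; apply euler_term_pos, hz. }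
  apply ex_series_DAlembert with 0; [lra | |].
  { intros k. pose proof (euler_term_pos z k hz). lra. }
  apply is_lim_seq_le_le with (fun _ => 0) (fun k => z / (1 - q) * q ^ k).
  - intros k. pose proof (qpow_S_bounds q hq k). pose proof (euler_coef_pos k).
    assert (0 < q ^ k) by (apply pow_lt; lra). assert (0 < z ^ k) by (apply pow_lt; lra).
    unfold euler_term. rewrite euler_coef_S.
    replace (q ^ k * euler_coef k / (1 - q ^ S k) * z ^ S k / (euler_coef k * z ^ k))
      with (z * q ^ k / (1 - q ^ S k)) by (simpl in *; field; repeat split; lra).
    rewrite Rabs_pos_eq by (left; apply Rdiv_lt_0_compat; nra).
    split; [left; apply Rdiv_lt_0_compat; nra|].
    unfold Rdiv. rewrite (Rmult_comm z), (Rmult_comm (z * / (1 - q))), !Rmult_assoc.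
    apply Rmult_le_compat_l; [lra|]. apply Rmult_le_compat_l; [lra|].
    apply Rinv_le_contravar; lra.
  - apply is_lim_seq_const.
  - replace (Finite 0) with (Rbar_mult (z / (1 - q)) 0) by (simpl; f_equal; ring).
    apply is_lim_seq_scal_l, is_lim_seq_geom. rewrite Rabs_pos_eq; lra.
Qed.

Lemma euler_functional (z : R) : 0 < z -> euler z = (1 + z) * euler (q * z).
Proof.
  intros hz. assert (hqz : 0 < q * z) by nra.
  pose proof (ex_series_euler z hz) as hexz. pose proof (ex_series_euler _ hqz) as hexqz.
  unfold euler. rewrite (Series_incr_1 (euler_term z)) by exact hexz.
  rewrite (Series_ext _ _ (euler_term_S z)).
  rewrite Series_plus, Series_scal_l, euler_term_0.
  - rewrite (Series_incr_1 (euler_term (q * z))) by exact hexqz. rewrite euler_term_0. ring.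
  - exact (proj1 (ex_series_incr_1 _) hexqz).
  - exact (ex_series_scal_l z _ hexqz).
Qed.

Lemma euler_bounds (z w : R) : 0 < w <= z -> 1 <= euler w <= 1 + w / z * (euler z - 1).
Proof.
  intros hw. assert (hz : 0 < z) by lra.
  assert (hr : 0 < w / z <= 1) by (split; [apply Rdiv_lt_0_compat | apply (Rdiv_le_1 w z)]; lra).
  pose proof (proj1 (ex_series_incr_1 _) (ex_series_euler z hz)) as hexz.
  pose proof (proj1 (ex_series_incr_1 _) (ex_series_euler w ltac:(lra))) as hexw.
  assert (hle : forall k, 0 <= euler_term w (S k) <= w / z * euler_term z (S k)).
  { intros k. pose proof (euler_term_pos w (S k) ltac:(lra)). split; [lra|].
    unfold euler_term. pose proof (euler_coef_pos (S k)).
    replace (w ^ S k) with (z ^ S k * (w / z) ^ S k)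
      by (rewrite <- Rpow_mult_distr; f_equal; field; lra).
    assert (0 < z ^ S k) by (apply pow_lt; lra).
    assert ((w / z) ^ S k <= w / z)
      by (simpl; pose proof (pow_le_one (w / z) k ltac:(lra)); nra).
    rewrite <- Rmult_assoc, (Rmult_comm (w / z)).
    apply Rmult_le_compat_l; [nra | assumption]. }
  assert (h0 : 0 * Series (fun k => euler_term w (S k)) <= Series (fun k => euler_term w (S k))).
  { rewrite <- Series_scal_l. apply Series_le; [|exact hexw].
    intros k; specialize (hle k); lra. }
  assert (hs : Series (fun k => euler_term w (S k)) <= w / z * Series (fun k => euler_term z (S k))).
  { rewrite <- Series_scal_l. apply Series_le; [exact hle | exact (ex_series_scal_l _ _ hexz)]. }
  unfold euler. rewrite (Series_incr_1 (euler_term w)), (Series_incr_1 (euler_term z))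
    by (apply ex_series_euler; lra).
  rewrite !euler_term_0. lra.
Qed.

Lemma euler_qpoch (z : R) (N : nat) : 0 < z -> qpoch (- z) q N * euler (q ^ N * z) = euler z.
Proof.
  intros hz. induction N as [|N IH].
  - simpl. now rewrite !Rmult_1_l.
  - rewrite qpoch_S, <- IH.
    assert (0 < q ^ N * z) by (apply Rmult_lt_0_compat; [apply pow_lt; lra | exact hz]).
    rewrite (euler_functional (q ^ N * z)) by assumption.
    replace (q ^ S N * z) with (q * (q ^ N * z)) by (simpl; ring). ring.
Qed.

Lemma euler_product (z : R) : 0 < z -> qpoch_inf (- z) q = euler z /\ 1 <= euler z.
Proof.
  intros hz.
  assert (hb : forall N, 1 <= euler (q ^ N * z) <= 1 + q ^ N * (euler z - 1)).
  { intros N. assert (0 < q ^ N <= 1) by (split; [apply pow_lt | apply pow_le_one]; lra).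
    replace (q ^ N * (euler z - 1)) with (q ^ N * z / z * (euler z - 1)) by (field; lra).
    apply euler_bounds. split; nra. }
  assert (hge1 : 1 <= euler z) by (specialize (hb 0%nat); simpl in hb; rewrite Rmult_1_l in hb; lra).
  assert (hlim1 : is_lim_seq (fun N => euler (q ^ N * z)) 1).
  { apply is_lim_seq_le_le with (fun _ => 1) (fun N => 1 + q ^ N * (euler z - 1)); [exact hb | apply is_lim_seq_const|].
    replace (Finite 1) with (Finite (1 + 0 * (euler z - 1))) by (f_equal; ring).
    apply is_lim_seq_plus'; [apply is_lim_seq_const|].
    assert (hgeom : is_lim_seq (fun N => q ^ N) 0) by (apply is_lim_seq_geom; rewrite Rabs_pos_eq; lra).
    exact (is_lim_seq_scal_r _ (euler z - 1) _ hgeom). }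
  assert (hlim : is_lim_seq (qpoch (- z) q) (euler z)).
  { apply is_lim_seq_ext with (fun N => euler z / euler (q ^ N * z)).
    { intros N. rewrite <- (euler_qpoch z N hz) at 1. field. specialize (hb N); lra. }
    replace (Finite (euler z)) with (Finite (euler z / 1)) by (f_equal; field).
    apply is_lim_seq_div with (euler z) 1;
      [apply is_lim_seq_const | exact hlim1 | intros e; injection e; lra | reflexivity]. }
  split; [exact (real_Lim_seq _ _ hlim) | exact hge1].
Qed.

End Euler.

(* The Jacobi triple product in the form needed here: for every n, theta(-t q^(1/2))
   factors as t^n q^(n^2/2) E(q^(1/2-n)/t) E(t q^(1/2+n)). *)
Section Theta.
Variables q t : R.
Hypotheses (hq : 0 < q < 1) (ht : 0 < t).

(* Numerator t^l q^(l^2/2) of the law of S. *)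
Definition gauss_weight (l : Z) : R := powerRZ t l * Rpower q (IZR (l * l) / 2).
(* The argument of the target product (-t q^(1/2+n); q)_oo ... *)
Definition up_arg (n : Z) : R := t * Rpower q (1/2 + IZR n).
(* ... and its dual argument q^(1/2-n)/t. *)
Definition down_arg (n : Z) : R := Rpower q (1/2 - IZR n) / t.

Lemma gauss_weight_pos (l : Z) : 0 < gauss_weight l.
Proof. apply Rmult_lt_0_compat; [apply powerRZ_lt; lra | apply exp_pos]. Qed.

Lemma up_arg_pos (n : Z) : 0 < up_arg n.
Proof. apply Rmult_lt_0_compat; [lra | apply exp_pos]. Qed.

Lemma down_arg_pos (n : Z) : 0 < down_arg n.
Proof. apply Rdiv_lt_0_compat; [apply exp_pos | lra]. Qed.

Lemma q_mul_Rpower (a : R) : q * Rpower q a = Rpower q (1 + a).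
Proof. rewrite Rpower_plus, Rpower_1 by lra. reflexivity. Qed.

Lemma gauss_weight_succ (n : Z) : gauss_weight (n + 1) = gauss_weight n * up_arg n.
Proof.
  unfold gauss_weight, up_arg. rewrite powerRZ_add by lra. simpl.
  replace (IZR ((n + 1) * (n + 1)) / 2) with (IZR (n * n) / 2 + (1/2 + IZR n))
    by (rewrite !mult_IZR, plus_IZR; simpl; field).
  rewrite Rpower_plus. ring.
Qed.

Lemma gauss_weight_pred (l : Z) : gauss_weight (l - 1) = gauss_weight l * down_arg l.
Proof.
  unfold gauss_weight, down_arg. replace (l - 1)%Z with (l + -1)%Z by lia.
  rewrite powerRZ_add by lra. simpl.
  replace (IZR ((l + -1) * (l + -1)) / 2) with (IZR (l * l) / 2 + (1/2 - IZR l))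
    by (rewrite !mult_IZR, plus_IZR; simpl; field).
  rewrite Rpower_plus. field. lra.
Qed.

(* Going m steps down multiplies by q^(m(m-1)/2) (q^(1/2-n)/t)^m: the Euler coefficients. *)
Lemma gauss_weight_shift (n : Z) (m : nat) : gauss_weight (n - Z.of_nat m)
  = gauss_weight n * Rpower q (INR m * (INR m - 1) / 2) * down_arg n ^ m.
Proof.
  induction m as [|m IH].
  - simpl. replace (n - 0)%Z with n by lia. replace (0 * (0 - 1) / 2) with 0 by field.
    rewrite Rpower_O by lra. ring.
  - replace (n - Z.of_nat (S m))%Z with ((n - Z.of_nat m) - 1)%Z by lia.
    rewrite gauss_weight_pred, IH, Rpower_triangular by lra.
    unfold down_arg. rewrite <- (Rpower_pow m q) by lra.
    replace (1 / 2 - IZR (n - Z.of_nat m)) with ((1/2 - IZR n) + INR m)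
      by (rewrite minus_IZR, <- INR_IZR_INZ; ring).
    rewrite Rpower_plus. simpl. field. lra.
Qed.

(* The quantity whose invariance under n -> n+1 is the triple product identity. *)
Definition jacobi_invariant (n : Z) : R :=
  gauss_weight n * euler q (down_arg n) * euler q (up_arg n).

(* E(z) = (1+z) E(qz) applied at q^(1/2-n-1)/t and at t q^(1/2+n), whose product is 1. *)
Lemma jacobi_invariant_succ (n : Z) : jacobi_invariant (n + 1) = jacobi_invariant n.
Proof.
  assert (hdown : q * down_arg (n + 1) = down_arg n).
  { unfold down_arg. rewrite Rmult_div_assoc, q_mul_Rpower, plus_IZR.
    replace (1 + (1 / 2 - (IZR n + 1))) with (1 / 2 - IZR n) by ring. reflexivity. }
  assert (hup : q * up_arg n = up_arg (n + 1)).
  { unfold up_arg. rewrite Rmult_comm, Rmult_assoc, (Rmult_comm _ q), q_mul_Rpower, plus_IZR.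
    replace (1 + (1 / 2 + IZR n)) with (1 / 2 + (IZR n + 1)) by ring. reflexivity. }
  assert (hdual : up_arg n * down_arg (n + 1) = 1).
  { unfold up_arg, down_arg. field_simplify; [|lra]. rewrite <- Rpower_plus, plus_IZR.
    replace (1 / 2 + IZR n + (1 / 2 - (IZR n + 1))) with 0 by field.
    rewrite Rpower_O by lra. field. }
  unfold jacobi_invariant. rewrite gauss_weight_succ.
  rewrite (euler_functional q hq (down_arg (n + 1))) by apply down_arg_pos.
  rewrite (euler_functional q hq (up_arg n)) by apply up_arg_pos.
  rewrite hdown, hup.
  transitivity (gauss_weight n * (up_arg n + up_arg n * down_arg (n + 1))
                * euler q (down_arg n) * euler q (up_arg (n + 1))); [ring|].
  rewrite hdual. ring.
Qed.

Lemma jacobi_invariant_const (n : Z) : jacobi_invariant n = jacobi_invariant 0.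
Proof.
  induction n using Z.peano_ind.
  - reflexivity.
  - now rewrite <- Z.add_1_r, jacobi_invariant_succ.
  - rewrite <- IHn, <- (jacobi_invariant_succ (Z.pred n)). f_equal. lia.
Qed.

(* J(0) = E(t q^(1/2)) E(q^(1/2)/t) = theta(-t q^(1/2)) by Euler's identity; hence the
   triple product theta(-t q^(1/2)) = J(n) for every n. *)
Lemma theta_factorization (n : Z) :
  qtheta (- t * Rpower q (1/2)) q = jacobi_invariant n.
Proof.
  set (s := Rpower q (1/2)).
  assert (hs : s * s = q).
  { unfold s. rewrite <- Rpower_plus. replace (1/2 + 1/2) with 1 by field. apply Rpower_1; lra. }
  assert (hspos : 0 < s) by apply exp_pos.
  assert (hup0 : up_arg 0 = t * s) by (unfold up_arg, s; now rewrite Rplus_0_r).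
  assert (hdown0 : down_arg 0 = s / t) by (unfold down_arg, s; now rewrite Rminus_0_r).
  assert (hgauss0 : gauss_weight 0 = 1).
  { unfold gauss_weight. simpl. replace (0 / 2) with 0 by field. rewrite Rpower_O by lra. ring. }
  rewrite jacobi_invariant_const. unfold jacobi_invariant, qtheta.
  rewrite hup0, hdown0, hgauss0.
  replace (- t * s) with (- (t * s)) by ring.
  replace (q / - (t * s)) with (- (s / t)) by (rewrite <- hs; field; lra).
  rewrite (proj1 (euler_product q hq (t * s) ltac:(nra))).
  rewrite (proj1 (euler_product q hq (s / t) ltac:(apply Rdiv_lt_0_compat; lra))).
  ring.
Qed.

(* In particular theta(-t q^(1/2)) > 0, so the law of S is well defined. *)
Lemma theta_pos : 0 < qtheta (- t * Rpower q (1/2)) q.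
Proof.
  rewrite (theta_factorization 0). unfold jacobi_invariant.
  pose proof (gauss_weight_pos 0).
  pose proof (proj2 (euler_product q hq _ (down_arg_pos 0))).
  pose proof (proj2 (euler_product q hq _ (up_arg_pos 0))).
  apply Rmult_lt_0_compat; [apply Rmult_lt_0_compat|]; lra.
Qed.

Lemma p_S_shift (n : Z) (m : nat) : p_S q t (n - Z.of_nat m) =
  gauss_weight n / (qpoch_inf q q * qtheta (- t * Rpower q (1/2)) q)
  * (euler_term q (down_arg n) m * qpoch q q m).
Proof.
  pose proof theta_pos. pose proof (proj2 (qqpoch_inf_spec q hq)).
  pose proof (qqpoch_bounds q hq m).
  unfold p_S. fold (gauss_weight (n - Z.of_nat m)).
  rewrite gauss_weight_shift. unfold euler_term, euler_coef.
  field. repeat split; lra.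
Qed.

(* The tails of the law of S are summable: they are dominated by Euler terms. *)
Lemma ex_series_p_S (n : Z) : ex_series (fun j => p_S q t (n - Z.of_nat j)).
Proof.
  set (K := gauss_weight n / (qpoch_inf q q * qtheta (- t * Rpower q (1/2)) q)).
  assert (hK : 0 < K).
  { pose proof theta_pos. pose proof (proj2 (qqpoch_inf_spec q hq)).
    apply Rdiv_lt_0_compat; [apply gauss_weight_pos | nra]. }
  apply (@ex_series_le _ R_CompleteNormedModule) with (fun j => K * euler_term q (down_arg n) j).
  - intros j. rewrite p_S_shift. fold K. change norm with Rabs.
    pose proof (qqpoch_bounds q hq j). pose proof (euler_term_pos q hq (down_arg n) j (down_arg_pos n)).
    rewrite Rabs_pos_eq by (apply Rmult_le_pos; [lra | nra]).
    apply Rmult_le_compat_l; nra.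
  - apply (ex_series_scal_l K (euler_term q (down_arg n))), ex_series_euler, down_arg_pos. exact hq.
Qed.

(* The claimed value 1/(-t q^(1/2+n); q)_oo, rewritten with the triple product. *)
Lemma target_value (n : Z) : / qpoch_inf (- t * Rpower q (1/2 + IZR n)) q
  = gauss_weight n / qtheta (- t * Rpower q (1/2)) q * euler q (down_arg n).
Proof.
  replace (- t * Rpower q (1/2 + IZR n)) with (- up_arg n) by (unfold up_arg; ring).
  destruct (euler_product q hq (up_arg n) (up_arg_pos n)) as [-> hup].
  destruct (euler_product q hq (down_arg n) (down_arg_pos n)) as [_ hdown].
  pose proof (gauss_weight_pos n).
  rewrite (theta_factorization n). unfold jacobi_invariant. field. repeat split; lra.
Qed.

End Theta.

(* Summation by parts for sum_k c_k (sum_{j>=k} d_j): it equals sum_m d_m (c_0 + ... + c_m)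
   as soon as the partial sums of c converge (no absolute convergence is needed). *)
Section TailSums.
Variables c d : nat -> R.
Hypothesis hd : ex_series d.

Definition tail (k : nat) : R := Series (fun j => d (k + j)).

Lemma tail_succ (k : nat) : tail k = d k + tail (S k).
Proof.
  unfold tail. rewrite Series_incr_1, Nat.add_0_r by exact (proj1 (ex_series_incr_n d k) hd).
  f_equal. apply Series_ext. intros j. f_equal. lia.
Qed.

Lemma tail_vanishes : is_lim_seq (fun k => tail (S k)) 0.
Proof.
  apply is_lim_seq_ext with (fun k => Series d - sum_n d k).
  { intros k. symmetry. apply is_series_unique.
    apply (is_series_incr_n d (S k)); [lia|]. simpl.
    replace (plus _ _) with (Series d) by (cbn; ring).
    exact (Series_correct d hd). }
  replace (Finite 0) with (Finite (Series d - Series d)) by (f_equal; ring).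
  apply is_lim_seq_minus'; [apply is_lim_seq_const | exact (Series_correct d hd)].
Qed.

Lemma tail_sum_by_parts (K : nat) :
  @eq R (sum_n (fun k => c k * tail k) K)
   ( sum_n (fun m => d m * sum_n c m) K + sum_n c K * tail (S K)).
Proof.
  induction K as [|K IH].
  - rewrite !sum_O, (tail_succ 0). ring.
  - rewrite !sum_Sn, IH, (tail_succ (S K)). unfold plus; simpl. ring.
Qed.

(* Letting K -> oo, the boundary term C_K T_(K+1) tends to Cl * 0. *)
Lemma is_series_tails (Cl L : R) :
  is_lim_seq (sum_n c) Cl -> is_series (fun m => d m * sum_n c m) L ->
  is_series (fun k => c k * tail k) L.
Proof.
  intros hc hL. change (is_lim_seq (sum_n (fun k => c k * tail k)) L).
  apply is_lim_seq_ext with (fun K => sum_n (fun m => d m * sum_n c m) K + sum_n c K * tail (S K)).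
  { intros K. symmetry. apply tail_sum_by_parts. }
  replace (Finite L) with (Finite (L + Cl * 0)) by (f_equal; ring).
  apply is_lim_seq_plus'; [exact hL|].
  apply is_lim_seq_mult'; [exact hc | exact tail_vanishes].
Qed.

End TailSums.

Lemma p_chi_cumulative (q : R) (m : nat) : 0 < q < 1 ->
  @eq R (sum_n (p_chi q) m) (qpoch_inf q q / qpoch q q m).
Proof.
  intros hq. induction m as [|m IH].
  - rewrite sum_O. unfold p_chi. simpl. field.
  - rewrite sum_Sn, IH. unfold plus, p_chi; simpl.
    pose proof (qqpoch_bounds q hq m). pose proof (qpow_S_bounds q hq m).
    simpl in *. field. split; lra.
Qed.

Lemma p_chi_total (q : R) : 0 < q < 1 -> is_lim_seq (sum_n (p_chi q)) 1.
Proof.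
  intros hq. destruct (qqpoch_inf_spec q hq) as [hlim hpos].
  apply is_lim_seq_ext with (fun m => / (qpoch q q m / qpoch_inf q q)).
  { intros m. rewrite p_chi_cumulative by exact hq.
    pose proof (qqpoch_bounds q hq m). field. split; lra. }
  assert (hratio : is_lim_seq (fun m => qpoch q q m / qpoch_inf q q) 1).
  { replace (Finite 1) with (Finite (qpoch_inf q q * / qpoch_inf q q)) by (f_equal; field; lra).
    exact (is_lim_seq_scal_r _ _ _ hlim). }
  replace (Finite 1) with (Rbar_inv 1) by (simpl; f_equal; field).
  apply is_lim_seq_inv; [exact hratio | intros e; injection e; lra].
Qed.

Theorem lemma2p4 (n : Z) (q t : R) (hq0 : 0 < q) (hq1 : q < 1) (ht : 0 < t) :
  (forall m : Z, ex_series (fun j : nat => p_S q t (m - Z.of_nat j)%Z)) /\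
  is_series (fun k : nat => p_chi q k * p_S_le q t (n - Z.of_nat k)%Z)
    (/ qpoch_inf (- t * Rpower q (1/2 + IZR n)) q).
Proof.
  assert (hq : 0 < q < 1) by lra.
  split; [intros m; exact (ex_series_p_S q t hq ht m)|].
  set (d := fun m : nat => p_S q t (n - Z.of_nat m)).
  (* P(S <= n - k) is the k-th tail of d. *)
  apply is_series_ext with (fun k => p_chi q k * tail d k).
  { intros k. f_equal. unfold tail, p_S_le, d. apply Series_ext. intros j. f_equal. lia. }
  apply (is_series_tails (p_chi q) d (ex_series_p_S q t hq ht n) 1);
    [exact (p_chi_total q hq)|].
  (* P(S = n - m) P(chi <= m) is a multiple of the m-th Euler term at q^(1/2-n)/t. *)
  pose proof (theta_pos q t hq ht). pose proof (proj2 (qqpoch_inf_spec q hq)).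
  assert (hterm : forall m, @eq R
    (gauss_weight q t n / qtheta (- t * Rpower q (1/2)) q * euler_term q (down_arg q t n) m)
    (d m * sum_n (p_chi q) m)).
  { intros m. unfold d. rewrite p_chi_cumulative, p_S_shift by assumption.
    pose proof (qqpoch_bounds q hq m). field. repeat split; lra. }
  apply (is_series_ext _ _ _ hterm).
  rewrite (target_value q t hq ht n).
  apply (is_series_scal_l _ (euler_term q (down_arg q t n))).
  apply Series_correct, ex_series_euler, down_arg_pos; assumption.
Qed.
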